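(* Let $A=[1,1,\dots,1]\in\mathbb R^{1\times N}$, $\vec w\in\mathbb R^N$ with $\sum_{i=1}^N w_i>0$, $b=A\vec w$, and let $(\vec x,(\lambda_i)_{i=1}^N,\gamma)$ satisfy the KKT conditions $x_i-w_i+\gamma-\lambda_i=0$, $\lambda_ix_i=0$, $\lambda_i\ge0$, $x_i\ge0$ ($i=1,\dots,N$), $\sum_{i=1}^Nx_i=b$ of the problem $\min_{\vec x\in\mathbb R^N}\frac12\|\vec x-\vec w\|_2^2$ subject to $A\vec x=b$, $x_i\ge0$. Let $B=\{j:x_j=0\}$ and let $\#B$ be its cardinality. Then: (i) for all $i\in B$ (i.e. $x_i=0$), $\lambda_i-\frac1N\sum_{j\in B}\lambda_j=-w_i$; (ii) for all $i$ with $x_i>0$, $x_i=w_i+\frac{1}{N-\#B}\sum_{j\in B}w_j$. *)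

From HB Require Import structures.
From mathcomp Require Import all_boot all_order all_algebra.
Set Implicit Arguments. Unset Strict Implicit. Unset Printing Implicit Defensive.
Import Order.TTheory GRing.Theory Num.Theory.
Local Open Scope ring_scope.

Definition KKT (R : realFieldType) (N : nat) (w x lam : 'I_N -> R) (gamma : R) : Prop :=
  [/\ forall i, x i - w i + gamma - lam i = 0,
      forall i, lam i * x i = 0,
      forall i, 0 <= lam i,
      forall i, 0 <= x i
    & \sum_(i < N) x i = \sum_(i < N) w i].

From HB Require Import structures.
From mathcomp Require Import all_boot all_order all_algebra.
Set Implicit Arguments. Unset Strict Implicit. Unset Printing Implicit Defensive.
Import Order.TTheory GRing.Theory Num.Theory.
Local Open Scope ring_scope.

(* Stationarity gives [lam i = x i - w i + gamma]; summing it over all [i]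
   and using [\sum x = \sum w] and [lam = 0] off the active set
   [B = {j | x j = 0}] yields [N gamma = \sum_B lam], which is (i) since
   [lam i = gamma - w i] on [B].  Off [B] stationarity reads
   [x j = w j - gamma]; summing over the complement of [B] and comparing with
   [\sum x = \sum w] yields [(N - #B) (- gamma) = \sum_B w], which is (ii).
   Neither the sign conditions nor [0 < \sum w] are needed: the index [i]
   in (i) or (ii) already makes the divisor nonzero. *)

Lemma mulrn_eq_mulVn (F : fieldType) (a s : F) (n : nat) :
  n%:R != 0 :> F -> a *+ n = s -> a = n%:R^-1 * s.
Proof. by move=> n_neq0 <-; rewrite -[a *+ n]mulr_natl mulKf. Qed.

Section KKTSimplex.

Variables (R : idomainType) (N : nat) (w x lam : 'I_N -> R) (gamma : R).
Hypothesis stationary : forall i, x i - w i + gamma - lam i = 0.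
Hypothesis slackness : forall i, lam i * x i = 0.
Hypothesis sum_x : \sum_(i < N) x i = \sum_(i < N) w i.

Local Notation active := [set j : 'I_N | x j == 0].

Lemma KKT_lamE i : lam i = x i - w i + gamma.
Proof. by apply/esym/eqP; rewrite -subr_eq0 stationary. Qed.

Lemma KKT_lam_inactive j : j \notin active -> lam j = 0.
Proof.
rewrite inE => /negbTE xj_neq0.
by have /eqP := slackness j; rewrite mulf_eq0 xj_neq0 orbF => /eqP.
Qed.

Lemma KKT_lam_active j : j \in active -> lam j = gamma - w j.
Proof. by rewrite inE KKT_lamE => /eqP ->; rewrite sub0r addrC. Qed.

Lemma KKT_x_inactive j : j \notin active -> x j = w j - gamma.
Proof.
move/KKT_lam_inactive; rewrite KKT_lamE => lam_j0.
by apply/eqP; rewrite -subr_eq0 opprD opprK addrA lam_j0.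
Qed.

Lemma KKT_multiplier_sum : gamma *+ N = \sum_(j in active) lam j.
Proof.
have -> : \sum_(j in active) lam j = \sum_(j < N) lam j.
  rewrite big_mkcond; apply: eq_bigr => j _.
  by case: ifP => // /negbT /KKT_lam_inactive ->.
under [RHS]eq_bigr do rewrite KKT_lamE.
by rewrite big_split /= sumrB sum_x subrr add0r sumr_const card_ord.
Qed.

Lemma KKT_multiplier_inactive_count :
  (- gamma) *+ (N - #|active|) = \sum_(j in active) w j.
Proof.
have sum_split (F : 'I_N -> R) :
    \sum_(j < N) F j = \sum_(j in active) F j + \sum_(j in ~: active) F j.
  by rewrite (bigID (mem active)) /=; congr (_ + _); apply: eq_bigl => j; rewrite in_setC.
have card_inactive : #|~: active| = (N - #|active|)%N.
  by rewrite cardsCs setCK card_ord.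
move: sum_x; rewrite !sum_split big1 => [|j]; last by rewrite inE => /eqP.
rewrite add0r (eq_bigr (fun j => w j - gamma)) => [|j]; last by rewrite in_setC => /KKT_x_inactive.
by rewrite sumrB sumr_const card_inactive mulNrn addrC => /addIr <-.
Qed.

End KKTSimplex.

Theorem lemma3 (R : realFieldType) (N : nat) (w x lam : 'I_N -> R) (gamma : R) :
  0 < \sum_(i < N) w i ->
  KKT w x lam gamma ->
  let B := [set j : 'I_N | x j == 0] in
  (forall i, i \in B -> lam i - N%:R^-1 * \sum_(j in B) lam j = - w i) /\
  (forall i, 0 < x i -> x i = w i + (N - #|B|)%:R^-1 * \sum_(j in B) w j).
Proof.
move=> _ [stationary slackness _ _ sum_x] B.
split=> [i iB | i xi_gt0].
  have N_neq0 : N%:R != 0 :> R by rewrite pnatr_eq0 -lt0n (leq_ltn_trans _ (ltn_ord i)).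
  have := KKT_multiplier_sum stationary slackness sum_x.
  move/(mulrn_eq_mulVn N_neq0) <-.
  by rewrite (KKT_lam_active stationary iB) addrAC subrr add0r.
have iB : i \notin B by rewrite inE gt_eqF.
have card_lt : (#|B| < N)%N.
  have B_proper : B \proper setT by rewrite properT; apply: contraNneq iB => ->; rewrite inE.
  by have := proper_card B_proper; rewrite cardsT card_ord.
have k_neq0 : (N - #|B|)%:R != 0 :> R by rewrite pnatr_eq0 subn_eq0 -ltnNge.
have := KKT_multiplier_inactive_count stationary slackness sum_x.
move/(mulrn_eq_mulVn k_neq0) <-.
by rewrite (KKT_x_inactive stationary slackness iB).
Qed.
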